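(* Let $X$ be a feasible solution of the General-Cost Convex Program and let $\alpha_i$ be the first arrival times produced by Continuous-Time Poisson Rounding from $X$. For any $\tau\ge 0$, $$\mathbf{E}\Big[\sum_{i:\,\alpha_i<\tau}c_i\Big]\le\tau.$$
   Context: Boxes $[n]$ with costs $c_i>0$. Write $x_+=\max\{x,0\}$. A feasible solution of the General-Cost Convex Program is a family of non-decreasing functions $X_i:[0,\infty)\to[0,1]$, $i\in[n]$, with $\sum_{i\in[n]}\big(X_i(t)-X_i((t-c_i)_+)\big)\le 1$ for all $t\ge 0$. Continuous-Time Poisson Rounding: let $\bar x_i(t)=\frac1t\int_0^t\big(X_i(t')-X_i((t'-c_i)_+)\big)\,dt'$. Independently for each box $i$, arrivals of box $i$ form a non-homogeneous Poisson process in time $\tau\ge 0$ with rate $\frac1{c_i}\bar x_i(\tau/2)$; $\alpha_i$ is the first arrival time of box $i$ ($\infty$ if none). *)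

From HB Require Import structures.
From mathcomp Require Import all_boot all_order all_algebra.
From mathcomp Require Import all_classical all_reals all_analysis.
From mathcomp Require Import measurable_realfun.
Set Implicit Arguments. Unset Strict Implicit. Unset Printing Implicit Defensive.
Import Order.TTheory GRing.Theory Num.Theory.
Import numFieldNormedType.Exports.
Local Open Scope classical_set_scope.
Local Open Scope ring_scope.

Section GCCP.
Variables (R : realType) (n : nat) (c : 'I_n -> R) (X : 'I_n -> R -> R).

Definition posp (x : R) : R := Num.max x 0.

(* feasibility for the General-Cost Convex Program; the functions X_i are
   defined on all of R but only their values on [0, oo) matter. *)
Definition GCCP_feasible : Prop :=
  (forall i s t, 0 <= s -> s <= t -> X i s <= X i t) /\
  (forall i t, 0 <= t -> 0 <= X i t <= 1) /\
  (forall t, 0 <= t -> \sum_(i < n) (X i t - X i (posp (t - c i))) <= 1).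

(* xbar_i(t) = (1/t) int_0^t (X_i(t') - X_i((t'-c_i)_+)) dt'
   (Lebesgue integral; at t = 0 the value is 0 since 0^-1 = 0 in MathComp,
   which is irrelevant: a single point is Lebesgue-null). *)
Definition xbar (i : 'I_n) (t : R) : R :=
  t^-1 * \int[@lebesgue_measure R]_(t' in `[0, t]) (X i t' - X i (posp (t' - c i))).

Definition poisson_rate (i : 'I_n) (tau : R) : R := (c i)^-1 * xbar i (tau / 2).

Definition cum_intensity (i : 'I_n) (t : R) : R :=
  \int[@lebesgue_measure R]_(s in `[0, t]) poisson_rate i s.

End GCCP.

(* alpha is the first arrival time of a (non-homogeneous) Poisson process with
   cumulative intensity Lam: P(no arrival in [0,t]) = P(alpha > t) = exp(-Lam t). *)
Definition first_arrival_law d (T : measurableType d) (R : realType)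
  (P : probability T R) (alpha : T -> \bar R) (Lam : R -> R) : Prop :=
  measurable_fun (setT : set T) (alpha : T -> \bar R) /\
  forall t : R, 0 <= t -> P [set w | (t%:E < alpha w)%E] = (expR (- Lam t))%:E.

Definition mutually_independent d (T : measurableType d) (R : realType)
  (P : probability T R) (n : nat) (alpha : 'I_n -> T -> \bar R) : Prop :=
  forall (J : {set 'I_n}) (B : 'I_n -> set (\bar R)),
    (forall j, measurable (B j)) ->
    P (\bigcap_(j in [set j | j \in J]) (alpha j @^-1` B j)) =
    (\prod_(j in J) P (alpha j @^-1` B j))%E.

From mathcomp Require Import all_boot all_order all_algebra.
From mathcomp Require Import all_classical all_reals all_analysis.
From mathcomp Require Import measurable_realfun.
From mathcomp Require Import lra.
Import Order.TTheory GRing.Theory Num.Theory.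
Import numFieldNormedType.Exports.
Local Open Scope classical_set_scope.
Local Open Scope ring_scope.

(* By linearity of expectation the left-hand side is sum_i c_i P(alpha_i < tau),
   and P(alpha_i < tau) <= 1 - exp(-Lambda_i(tau)) <= Lambda_i(tau).  Moreover
   c_i Lambda_i(tau) = int_0^tau xbar_i(s/2) ds, so it suffices that
   sum_i xbar_i(t) <= 1 for every t >= 0: this is the feasibility constraint
   sum_i (X_i(t') - X_i((t' - c_i)_+)) <= 1 averaged over t' in [0, t]. *)

Lemma ler_term_sum (R : numDomainType) (I : finType) (F : I -> R) (i : I) :
  (forall j, 0 <= F j) -> F i <= \sum_j F j.
Proof. by move=> F0; rewrite (bigD1 i) //= lerDl sumr_ge0. Qed.

Section unit_valued_integral.
Context {d} {T : measurableType d} {R : realType} (mu : {measure set T -> \bar R}).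
Context {D : set T}.
Hypothesis mD : measurable D.

Lemma integral_unit_valued_le_measure {f : T -> R} : measurable_fun D f ->
  (forall x, D x -> 0 <= f x <= 1) -> (\int[mu]_(x in D) (f x)%:E <= mu D)%E.
Proof.
move=> mf f01; rewrite -[mu D]mul1e -integral_cst //.
apply: ge0_le_integral => //.
- by move=> x /f01/andP[f0 _]; rewrite lee_fin.
- exact/measurable_EFinP.
- by move=> x /f01/andP[_ f1]; rewrite lee_fin.
Qed.

Hypothesis muD_fin : (mu D < +oo)%E.

Lemma integrable_unit_valued {f : T -> R} : measurable_fun D f ->
  (forall x, D x -> 0 <= f x <= 1) -> mu.-integrable D (EFin \o f).
Proof.
move=> mf f01; apply/integrableP; split; first exact/measurable_EFinP.
apply: le_lt_trans muD_fin; rewrite (eq_integral (fun x => (f x)%:E)).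
  exact: integral_unit_valued_le_measure.
by move=> x /[!inE] /f01/andP[f0 _] /=; rewrite ger0_norm.
Qed.

Lemma Rintegral_unit_valuedE {f : T -> R} : measurable_fun D f ->
  (forall x, D x -> 0 <= f x <= 1) ->
  (\int[mu]_(x in D) f x)%:E = (\int[mu]_(x in D) (f x)%:E)%E.
Proof.
by move=> mf f01; rewrite fineK // integrable_fin_num // integrable_unit_valued.
Qed.

Lemma sum_Rintegral_le_measure (I : finType) (f : I -> T -> R) :
  (forall i, measurable_fun D (f i)) -> (forall i x, D x -> 0 <= f i x) ->
  (forall x, D x -> \sum_i f i x <= 1) ->
  ((\sum_i \int[mu]_(x in D) f i x)%:E <= mu D)%E.
Proof.
move=> mf f0 sumf1.
have f01 i x : D x -> 0 <= f i x <= 1.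
  move=> Dx; rewrite f0 //=; apply: le_trans (sumf1 _ Dx).
  by apply: ler_term_sum => j; exact: f0.
rewrite -sumEFin (eq_bigr _ (fun i _ => Rintegral_unit_valuedE (mf i) (f01 i))).
rewrite -ge0_integral_sum //; last by move=> i; exact/measurable_EFinP.
under eq_integral do rewrite sumEFin.
apply: integral_unit_valued_le_measure => [|x Dx]; first exact: measurable_sum.
by rewrite sumf1 // andbT sumr_ge0 // => i _; exact: f0.
Qed.

End unit_valued_integral.

Section lebesgue_cc.
Context {R : realType}.
Local Notation mu := (@lebesgue_measure R).

Lemma lebesgue_measure_cc (a b : R) : a <= b -> mu `[a, b] = (b - a)%:E.
Proof.
rewrite le_eqVlt => /predU1P[<-|ab].
  by rewrite set_itv1 lebesgue_measure_set1 subrr.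
by rewrite lebesgue_measure_itv /= lte_fin ab EFinB.
Qed.

Lemma lebesgue_measure_cc_fin (a b : R) : (mu `[a, b] < +oo)%E.
Proof.
have [ab|ba] := leP a b; first by rewrite lebesgue_measure_cc // ltry.
by rewrite set_itv_ge ?measure0 // ltBSide /= -ltNge.
Qed.

Lemma measurable_inv_gt0 : measurable_fun (`]0, +oo[ : set R) (@GRing.inv R).
Proof.
apply: open_continuous_measurable_fun; first exact: rray_open.
move=> x; rewrite inE /= in_itv /= andbT => x0.
by apply: inv_continuous; rewrite gt_eqF.
Qed.

Lemma nondecreasing_Rintegral_cc0 (f : R -> R) : measurable_fun setT f ->
  (forall x, 0 <= f x <= 1) ->
  nondecreasing_fun (fun t => \int[mu]_(x in `[0, t]) f x).
Proof.
move=> mf f01 s t st /=.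
have f01D (D : set R) x : D x -> 0 <= f x <= 1 by move=> _; exact: f01.
have [s_lt0|s_ge0] := ltP s 0.
  rewrite set_itv_ge ?Rintegral_set0; last by rewrite ltBSide /= -ltNge.
  by apply: Rintegral_ge0 => x /f01D/andP[].
have mfD (D : set R) : measurable_fun D f :=
  measurable_funS measurableT (@subsetT _ D) mf.
rewrite -lee_fin !(Rintegral_unit_valuedE mu (measurable_itv _)
  (lebesgue_measure_cc_fin _ _) (mfD _) (f01D _)).
apply: ge0_subset_integral => //.
- by apply/measurable_EFinP; exact: mfD.
- by move=> x /f01D/andP[f0 _]; rewrite lee_fin.
- by move=> x /=; rewrite !in_itv /= => /andP[-> xs]; exact: le_trans st.
Qed.

Lemma sum_Rintegral_cc0_le (I : finType) (f : I -> R -> R) (t : R) : 0 <= t ->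
  (forall i, measurable_fun `[0, t] (f i)) ->
  (forall i x, 0 <= x <= t -> 0 <= f i x) ->
  (forall x, 0 <= x <= t -> \sum_i f i x <= 1) ->
  \sum_i \int[mu]_(x in `[0, t]) f i x <= t.
Proof.
move=> t0 mf f0 sumf1.
have := sum_Rintegral_le_measure mu (measurable_itv `[0, t])
  (lebesgue_measure_cc_fin 0 t) _ _ mf.
rewrite /= (lebesgue_measure_cc _ _ t0) subr0 lee_fin.
apply=> [i x|x]; rewrite /= in_itv /=.
  exact: f0.
exact: sumf1.
Qed.

End lebesgue_cc.

Section positive_part.
Context {R : realType}.

Lemma posp_ge0 (t : R) : 0 <= posp t.
Proof. by rewrite /posp le_max lexx orbT. Qed.

Lemma ge0_posp (t : R) : 0 <= t -> posp t = t.
Proof. by move=> t0; rewrite /posp max_l. Qed.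

Lemma nondecreasing_posp : nondecreasing_fun (@posp R).
Proof. by move=> s t st; rewrite /posp le_max !ge_max; case: (leP 0 s) => s0; lra. Qed.

End positive_part.

Section GCCP_feasible_solution.
Context {R : realType} {n : nat} (c : 'I_n -> R) (X : 'I_n -> R -> R).
Hypotheses (c_gt0 : forall i, 0 < c i) (feasX : GCCP_feasible c X).
Local Notation mu := (@lebesgue_measure R).

(* Both arguments are clamped, so that occupancy i is a difference of
   nondecreasing functions on all of R (hence measurable); on [0, +oo) it is
   the integrand of xbar. *)
Definition occupancy (i : 'I_n) (t : R) : R := X i (posp t) - X i (posp (t - c i)).

Lemma nondecreasing_X_posp i : nondecreasing_fun (fun t => X i (posp t)).
Proof.
move=> s t st; case: feasX => [X_nd _].
by apply: X_nd; [exact: posp_ge0 | exact: nondecreasing_posp].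
Qed.

Lemma occupancy_itv i t : 0 <= occupancy i t <= 1.
Proof.
have [_ [X01 _]] := feasX.
have /andP[Xt0 Xt1] := X01 i _ (posp_ge0 t).
have /andP[Xs0 Xs1] := X01 i _ (posp_ge0 (t - c i)).
have : X i (posp (t - c i)) <= X i (posp t).
  by apply: nondecreasing_X_posp; rewrite gerBl ltW.
rewrite /occupancy; lra.
Qed.

Lemma measurable_occupancy i : measurable_fun setT (occupancy i).
Proof.
apply: measurable_funB; first exact: nondecreasing_measurable (nondecreasing_X_posp i).
apply: nondecreasing_measurable => // s t st.
by apply: nondecreasing_X_posp; rewrite lerB.
Qed.

Lemma sum_occupancy_le1 t : 0 <= t -> \sum_i occupancy i t <= 1.
Proof.
move=> t0; have [_ [_ sumX]] := feasX.
by under eq_bigr do rewrite /occupancy (ge0_posp _ t0); exact: sumX.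
Qed.

Lemma xbarE i t : 0 <= t ->
  xbar c X i t = t^-1 * \int[mu]_(x in `[0, t]) occupancy i x.
Proof.
move=> t0; rewrite /xbar; congr (_ * _); apply: eq_Rintegral => x.
by rewrite inE /= in_itv /= => /andP[x0 _]; rewrite /occupancy [posp x]ge0_posp.
Qed.

Lemma xbar_ge0 i t : 0 <= t -> 0 <= xbar c X i t.
Proof.
move=> t0; rewrite xbarE // mulr_ge0 ?invr_ge0 //.
by apply: Rintegral_ge0 => x _; have /andP[] := occupancy_itv i x.
Qed.

Lemma sum_xbar_le1 t : 0 <= t -> \sum_i xbar c X i t <= 1.
Proof.
move=> t0; under eq_bigr do rewrite xbarE //; rewrite -mulr_sumr.
have [->|t_neq0] := eqVneq t 0; first by rewrite invr0 mul0r.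
have t_gt0 : 0 < t by rewrite lt_neqAle eq_sym t_neq0.
rewrite mulrC ler_pdivrMr // mul1r; apply: sum_Rintegral_cc0_le => //.
- by move=> i; exact: measurable_funS (measurable_occupancy i).
- by move=> i x _; have /andP[] := occupancy_itv i x.
- by move=> x /andP[x0 _]; exact: sum_occupancy_le1.
Qed.

Lemma xbar_itv i t : 0 <= t -> 0 <= xbar c X i t <= 1.
Proof.
move=> t0; rewrite xbar_ge0 //= (le_trans _ (sum_xbar_le1 t t0)) //.
by apply: ler_term_sum => j; exact: xbar_ge0.
Qed.

Lemma measurable_xbar_half i (tau : R) :
  measurable_fun `[0, tau] (fun s => xbar c X i (s / 2)).
Proof.
(* Away from s = 0, xbar (s / 2) is 2 / s times a nondecreasing function of s. *)
apply/measurable_fun_itv_obnd_cbndP.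
apply: (eq_measurable_fun
  (fun s : R => 2 / s * \int[mu]_(x in `[0, s / 2]) occupancy i x)).
  move=> s; rewrite inE /= in_itv /= => /andP[s_gt0 _].
  by rewrite xbarE ?invf_div // divr_ge0 // ltW.
apply: measurable_funM.
  apply: measurable_funM; first exact: measurable_cst.
  apply: measurable_funS measurable_inv_gt0 => // s /=.
  by rewrite !in_itv /= => /andP[-> _].
apply: nondecreasing_measurable => // s t st.
apply: nondecreasing_Rintegral_cc0; last lra.
- exact: measurable_occupancy.
- exact: occupancy_itv.
Qed.

Lemma cum_intensityE i (tau : R) : 0 <= tau ->
  c i * cum_intensity c X i tau = \int[mu]_(s in `[0, tau]) xbar c X i (s / 2).
Proof.
move=> tau0; rewrite /cum_intensity /poisson_rate RintegralZl //.
  by rewrite mulrA mulfV ?gt_eqF // mul1r.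
apply: integrable_unit_valued => //; first exact: lebesgue_measure_cc_fin.
  exact: measurable_xbar_half.
by move=> s; rewrite /= in_itv /= => /andP[s0 _]; apply: xbar_itv; lra.
Qed.

Lemma sum_cum_intensity_le (tau : R) : 0 <= tau ->
  \sum_i c i * cum_intensity c X i tau <= tau.
Proof.
move=> tau0; under eq_bigr do rewrite cum_intensityE //.
apply: sum_Rintegral_cc0_le => // [i|i s /andP[s0 _]|s /andP[s0 _]].
- exact: measurable_xbar_half.
- by apply: xbar_ge0; lra.
- by apply: sum_xbar_le1; lra.
Qed.

End GCCP_feasible_solution.

Lemma ge0_integral_weighted_count d (T : measurableType d) (R : realType)
    (mu : {measure set T -> \bar R}) (I : finType) (c : I -> R) (p : I -> T -> bool) :
  (forall i, 0 <= c i) -> (forall i, measurable [set w | p i w]) ->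
  (\int[mu]_w (\sum_(i | p i w) c i)%:E = \sum_i (c i)%:E * mu [set w | p i w])%E.
Proof.
move=> c0 mp.
have -> : (fun w => (\sum_(i | p i w) c i)%:E) =
          (fun w => \sum_i (c i * \1_[set w | p i w] w)%:E)%E.
  apply: boolp.funext => w; rewrite sumEFin big_mkcond /=; congr EFin.
  apply: eq_bigr => i _; rewrite indicE; case: ifP => piw.
    by rewrite mem_set // mulr1.
  by rewrite memNset ?mulr0 //= piw.
have m1 i : measurable_fun setT (fun w => (\1_[set w | p i w] w)%:E : \bar R).
  exact/measurable_EFinP/measurable_indic.
rewrite ge0_integral_sum //; last 2 first.
- by move=> i; under eq_fun do rewrite EFinM; exact: emeasurable_funM.
- by move=> i w _; rewrite lee_fin mulr_ge0.
apply: eq_bigr => i _; under eq_integral do rewrite EFinM.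
by rewrite ge0_integralZl_EFin // integral_indic // setIT.
Qed.

Section first_arrival.
Context d (T : measurableType d) (R : realType) (P : probability T R).
Variables (alpha : T -> \bar R) (Lam : R -> R).
Hypothesis alpha_law : first_arrival_law P alpha Lam.

Lemma measurable_first_arrival_lt (tau : R) : measurable [set w | (alpha w < tau%:E)%E].
Proof.
have [malpha _] := alpha_law; rewrite -[X in measurable X]setTI.
by apply: measurable_lte => //; exact: measurable_cst.
Qed.

Lemma first_arrival_lt_le (tau : R) : 0 <= tau ->
  (P [set w | (alpha w < tau%:E)%E] <= (Lam tau)%:E)%E.
Proof.
move=> tau0; have [malpha no_arrival] := alpha_law.
have mgt : measurable [set w | (tau%:E < alpha w)%E].
  rewrite -[X in measurable X]setTI.
  by apply: measurable_lte => //; exact: measurable_cst.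
apply: (@le_trans _ _ (P (~` [set w | (tau%:E < alpha w)%E]))).
  apply: le_measure; rewrite ?inE.
  - exact: measurable_first_arrival_lt.
  - exact: measurableC.
  - by move=> w /= lt_tau gt_tau; move: (lt_trans lt_tau gt_tau); rewrite ltxx.
rewrite probability_setC // no_arrival // -EFinB lee_fin.
have := expR_ge1Dx (- Lam tau); lra.
Qed.

End first_arrival.

Theorem lemma4p3 (R : realType) (n : nat) (c : 'I_n -> R) (X : 'I_n -> R -> R)
  (d : measure_display) (T : measurableType d) (P : probability T R)
  (alpha : 'I_n -> T -> \bar R) :
  (forall i, 0 < c i) ->
  GCCP_feasible c X ->
  mutually_independent P alpha ->
  (forall i, first_arrival_law P (alpha i) (cum_intensity c X i)) ->
  forall tau : R, 0 <= tau ->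
  (\int[P]_w (\sum_(i < n | (alpha i w < tau%:E)%E) c i)%:E <= tau%:E)%E.
Proof.
move=> c_gt0 feasX _ law tau tau0.
rewrite ge0_integral_weighted_count; last 2 first.
- by move=> i; exact: ltW.
- by move=> i; exact: measurable_first_arrival_lt.
apply: (@le_trans _ _ (\sum_i (c i * cum_intensity c X i tau)%:E)%E).
  apply: lee_sum => i _; rewrite EFinM lee_pmul2l ?lte_fin //.
  exact: first_arrival_lt_le.
by rewrite sumEFin lee_fin sum_cum_intensity_le.
Qed.
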